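(* Let $(R,\mathfrak m,k)$ be a one-dimensional analytically irreducible local domain with canonical map $k\to\overline R/\mathfrak n$ an isomorphism, with $v,a_i,n,I_i$ as in the context, and let $1\le i\le n-2$. The following are equivalent: (1) for every $r\in R$ with $v(r)=a_i$, $I_iI_{i+2}=rI_{i+2}$; (2) there exists $q\in R$ with $v(q)=a_i$ and $I_iI_{i+2}=qI_{i+2}$. If moreover $i\le n-3$ and $s\in R$ is an element with $v(s)=a_{i+1}$ and $I_{i+1}I_{i+3}=sI_{i+3}$, then (1) and (2) are also equivalent to: (3) there exists $q\in R$ with $v(q)=a_i$ and $sI_{i+2}\subseteq (q)$.
   Context: $\overline R$ is the integral closure of $R$ in $Q(R)$, assumed finitely generated over $R$ and local with maximal ideal $\mathfrak n$; $v$ is the normalized valuation of $\overline R$; $v(R)=\{a_0=0<a_1<\cdots\}$; $n$ is the smallest integer with $a_{n+i}=a_n+i$ for all $i\ge 0$; $I_j=\{r\in R\mid v(r)\ge a_j\}$ for $0\le j\le n$. *)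

(* Subrings R of a field K are Prop-valued subsets of K. *)
From mathcomp Require Import all_boot all_order all_algebra.
Set Implicit Arguments. Unset Strict Implicit. Unset Printing Implicit Defensive.
Import Order.TTheory GRing.Theory Num.Theory.
Local Open Scope ring_scope.

Section Defs.
Variable K : fieldType.

Definition is_subring (R : K -> Prop) : Prop :=
  [/\ R 1, (forall x y, R x -> R y -> R (x - y)) & (forall x y, R x -> R y -> R (x * y))].

Definition is_fraction_field_of (R : K -> Prop) : Prop :=
  forall x, exists a b, [/\ R a, R b, b != 0 & x = a / b].

Definition nonunit_in (R : K -> Prop) (x : K) : Prop :=
  R x /\ ~ (exists y, R y /\ x * y = 1).

Definition is_local (R : K -> Prop) : Prop :=
  (forall x y, nonunit_in R x -> nonunit_in R y -> nonunit_in R (x + y)) /\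
  (forall x y, nonunit_in R x -> R y -> nonunit_in R (x * y)).

Definition integral_over (R : K -> Prop) (x : K) : Prop :=
  exists p : {poly K}, [/\ p \is monic, (forall j, R p`_j) & root p x].

Definition finitely_generated_over (R S : K -> Prop) : Prop :=
  exists (m : nat) (g : 'I_m -> K), (forall j, S (g j)) /\
    forall x, S x -> exists c : 'I_m -> K, (forall j, R (c j)) /\ x = \sum_(j < m) c j * g j.

(* v : K^* -> Z is a normalized (surjective) discrete valuation
   (its value at 0 is irrelevant). *)
Definition normalized_discrete_valuation (v : K -> int) : Prop :=
  [/\ (forall x y, x != 0 -> y != 0 -> v (x * y) = v x + v y),
      (forall x y z, x != 0 -> y != 0 -> x + y != 0 ->
          z <= v x -> z <= v y -> z <= v (x + y)) &
      (forall z : int, exists x, x != 0 /\ v x = z)].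

Definition val_ring (v : K -> int) (x : K) : Prop := x = 0 \/ 0 <= v x.
Definition val_max (v : K -> int) (x : K) : Prop := x = 0 \/ 0 < v x.

Definition Ival (R : K -> Prop) (v : K -> int) (a : nat -> int) (j : nat) (x : K) : Prop :=
  R x /\ (x = 0 \/ a j <= v x).

Definition ideal_mul (I J : K -> Prop) (x : K) : Prop :=
  exists (m : nat) (f g : 'I_m -> K),
    [/\ (forall j, I (f j)), (forall j, J (g j)) & x = \sum_(j < m) f j * g j].

Definition scale_set (r : K) (I : K -> Prop) (x : K) : Prop :=
  exists y, I y /\ x = r * y.

Definition set_eq (A B : K -> Prop) : Prop := forall x, A x <-> B x.
Definition set_sub (A B : K -> Prop) : Prop := forall x, A x -> B x.

End Defs.

Definition stable_from (a : nat -> int) (m : nat) : Prop :=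
  forall k : nat, a (m + k)%N = a m + k%:Z.

(* For [q] of value [a j], the equality [I_j I_k = q I_k] says exactly that
   [x y / q] lies in [R] for all [x] in [I_j] and [y] in [I_k]. Two facts drive
   everything: elements of [K] of large enough value lie in [R] (a conductor,
   from the finiteness of the normalisation), and, the residue fields being
   equal, an element of [R] of the same value as [q] is [l q] plus an element
   of strictly larger value, with [l] in [R].
   (2) => (1): if [q] works and [v r = v q], write [q = l r + q']; then
   [x y / r = l (x y / q) + x (q' y / q) / r] where [q' y / q] is in [I_k] with
   value larger than [v y], and iterating reaches the conductor.
   (3) => (2): for [x] in [I_(i+1)], [s y = q w] with [w] in [I_(i+3)] since
   no value of [R] lies strictly between [a_(i+2)] and [a_(i+3)], so
   [x y / q = x w / s] is in [R]; a general [x] in [I_i] is [l q] plus an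
   element of [I_(i+1)]. *)

From mathcomp Require Import all_boot all_order all_algebra.
From mathcomp Require Import zify ring.
Import Order.TTheory GRing.Theory Num.Theory.
Local Open Scope ring_scope.

Set Implicit Arguments.
Unset Strict Implicit.
Unset Printing Implicit Defensive.

Section Subring.
Variables (K : fieldType) (R : K -> Prop).
Hypothesis HR : is_subring R.

Lemma subring0 : R 0.
Proof. by case: HR => R1 RB _; rewrite -(subrr 1); apply: RB. Qed.

Lemma subringB x y : R x -> R y -> R (x - y).
Proof. by case: HR => _ RB _; apply: RB. Qed.

Lemma subringD x y : R x -> R y -> R (x + y).
Proof.
by move=> Rx Ry; have := subringB Rx (subringB subring0 Ry); rewrite sub0r opprK.
Qed.

Lemma subringM x y : R x -> R y -> R (x * y).
Proof. by case: HR => _ _; apply. Qed.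

Lemma subring_sum m (F : 'I_m -> K) : (forall j, R (F j)) -> R (\sum_(j < m) F j).
Proof. by move=> RF; apply: big_ind => //; [apply: subring0 | apply: subringD]. Qed.

Lemma common_denominator m (g : 'I_m -> K) : is_fraction_field_of R ->
  exists d, [/\ R d, d != 0 & forall j, R (d * g j)].
Proof.
move=> HQ; elim: m g => [|m IH] g.
  by exists 1; split; [case: HR | apply: oner_neq0 | case].
have [d [Rd d0 Rdg]] := IH (fun j => g (lift ord0 j)).
have [b [c [Rb Rc c0 gb]]] := HQ (g ord0).
exists (d * c); split; [exact: subringM | by rewrite mulf_neq0 |].
move=> j; case: (unliftP ord0 j) => [k -> | ->].
  by rewrite mulrAC; apply: subringM.
have -> : d * c * g ord0 = d * b by rewrite gb; field.
exact: subringM.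
Qed.

End Subring.

Section Valuation.
Variables (K : fieldType) (v : K -> int).
Hypothesis Hv : normalized_discrete_valuation v.

Lemma valuationM x y : x != 0 -> y != 0 -> v (x * y) = v x + v y.
Proof. by case: Hv => vM _ _; apply: vM. Qed.

Lemma valuation1 : v 1 = 0.
Proof. have : v 1 = v 1 + v 1 by rewrite -valuationM ?mulr1 ?oner_neq0. lia. Qed.

Lemma valuationV x : x != 0 -> v x^-1 = - v x.
Proof.
move=> x0; have : v 1 = v x + v x^-1 by rewrite -valuationM ?invr_neq0 ?mulfV.
by rewrite valuation1; lia.
Qed.

Lemma valuation_div x y : x != 0 -> y != 0 -> v (x / y) = v x - v y.
Proof. by move=> x0 y0; rewrite valuationM ?invr_neq0 // valuationV. Qed.

Lemma valuation_ge_add z x y :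
  (x = 0 \/ z <= v x) -> (y = 0 \/ z <= v y) -> x + y = 0 \/ z <= v (x + y).
Proof.
have [-> _ hy | x0 [/eqP | hx]] := eqVneq x 0; [by rewrite add0r | by rewrite (negbTE x0) |].
have [-> _ | y0 [/eqP | hy]] := eqVneq y 0; [by rewrite addr0; right | by rewrite (negbTE y0) |].
have [-> | s0] := eqVneq (x + y) 0; [by left | right].
by case: Hv => _ vD _; apply: vD.
Qed.

End Valuation.

Lemma conductor_exists (K : fieldType) (R : K -> Prop) (v : K -> int) :
  is_subring R -> is_fraction_field_of R -> normalized_discrete_valuation v ->
  finitely_generated_over R (val_ring v) ->
  exists D, forall z, z != 0 -> D <= v z -> R z.
Proof.
move=> HR HQ Hv [m [g [_ gen]]].
have [d [Rd d0 Rdg]] := common_denominator HR g HQ.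
exists (v d) => z z0 hz.
have vzd : val_ring v (z / d) by right; rewrite valuation_div //; lia.
rewrite -[z](divfK d0) mulrC; have [c [Rc ->]] := gen _ vzd.
rewrite mulr_sumr; apply: subring_sum => // j.
by rewrite mulrCA; apply: subringM.
Qed.

Section ValueSemigroup.
Variables (K : fieldType) (R : K -> Prop) (v : K -> int) (a : nat -> int).
Hypothesis HR : is_subring R.
Hypothesis Hv : normalized_discrete_valuation v.
Hypothesis Hres : forall x, val_ring v x -> exists r, R r /\ val_max v (x - r).
Hypothesis Ha_incr : forall j, a j < a j.+1.
Hypothesis HaR : forall r, R r -> r != 0 -> exists j, v r = a j.
Variable D : int.
Hypothesis HD : forall z, z != 0 -> D <= v z -> R z.

Local Notation I := (Ival R v a).

Definition divides_products (q : K) (J L : K -> Prop) : Prop :=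
  forall x y, J x -> L y -> R (x * y / q).

Lemma value_leq : {homo a : j k / (j <= k)%N >-> j <= k}.
Proof. by apply: homo_leq => [//|y x z|j]; [apply: le_trans | apply: ltW]. Qed.

Lemma value_gap j r : R r -> r != 0 -> a j < v r -> a j.+1 <= v r.
Proof.
move=> Rr r0; have [k ->] := HaR Rr r0 => ajk.
case: (ltnP j k) => [/value_leq // | /value_leq akj].
by rewrite ltNge akj in ajk.
Qed.

Lemma residue_approx x q : R x -> R q -> x != 0 -> q != 0 -> v x = v q ->
  exists2 l, R l & x - l * q = 0 \/ v q < v (x - l * q).
Proof.
move=> Rx Rq x0 q0 vxq.
have [l [Rl hl]] : exists l, R l /\ val_max v (x / q - l).
  by apply: Hres; right; rewrite valuation_div // vxq subrr.
exists l => //; rewrite -[x](divfK q0) -mulrBl.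
have [-> | d0] := eqVneq (x / q - l) 0; first by left; rewrite mul0r.
right; case: hl => [/eqP | hl]; first by rewrite (negbTE d0).
by rewrite valuationM // ltrDr.
Qed.

Lemma Ival_ge j x : I j x -> x != 0 -> a j <= v x.
Proof. by case=> _ [-> | //]; rewrite eqxx. Qed.

Lemma Ival_succ j x : R x -> x = 0 \/ a j < v x -> I j.+1 x.
Proof.
move=> Rx hx; split=> //; have [-> | x0] := eqVneq x 0; [by left | right].
by case: hx => [/eqP | /(value_gap Rx x0)]; first by rewrite (negbTE x0).
Qed.

Lemma Ival_sum j m (F : 'I_m -> K) : (forall t, I j (F t)) -> I j (\sum_(t < m) F t).
Proof.
move=> IF; apply: big_ind => //; first by split; [exact: (subring0 HR) | left].
by move=> x y [Rx hx] [Ry hy]; split; [apply: (subringD HR) | apply: valuation_ge_add].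
Qed.

Lemma Ival_mul_eq_scaleP j k q : R q -> q != 0 -> v q = a j ->
  set_eq (ideal_mul (I j) (I k)) (scale_set q (I k)) <-> divides_products q (I j) (I k).
Proof.
move=> Rq q0 vq; split=> [Heq x y Ix Iy | Hdiv z].
  have : ideal_mul (I j) (I k) (x * y).
    by exists 1%N, (fun=> x), (fun=> y); rewrite big_ord1.
  by case/Heq=> w [[Rw _] ->]; rewrite mulrC mulKf.
split=> [[m [f [g [If Ig ->]]]] | [y [Iy ->]]].
  exists (\sum_(t < m) f t * g t / q); split.
    apply: Ival_sum => t; split; first exact: Hdiv.
    have [-> | fg0] := eqVneq (f t * g t) 0; [by left; rewrite mul0r | right].
    move: (fg0); rewrite mulf_eq0 negb_or => /andP [f0 g0].
    rewrite valuation_div // valuationM // vq.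
    by have := Ival_ge (If t) f0; have := Ival_ge (Ig t) g0; lia.
  by rewrite mulr_sumr; apply: eq_bigr => t _; rewrite [RHS]mulrC divfK.
exists 1%N, (fun=> q), (fun=> y); rewrite big_ord1; split=> // _.
by split=> //; right; rewrite vq.
Qed.

Lemma divides_products_same_value j k q r : R q -> R r -> q != 0 -> r != 0 ->
  v q = a j -> v r = a j ->
  divides_products q (I j) (I k) -> divides_products r (I j) (I k).
Proof.
move=> Rq Rr q0 r0 vq vr Hq.
have [l Rl hl] := residue_approx Rq Rr q0 r0 (etrans vq (esym vr)).
set q' := q - l * r in hl *.
have Iq' : I j q'.
  split; first by apply: (subringB HR) => //; apply: (subringM HR).
  by case: hl => [-> | h]; [left | right; rewrite -vr ltW].
(* Multiplying [y] by [q' / q] raises its value: induct on [D - v y]. *)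
suff key m y : I k y -> D <= v y + m%:Z -> forall x, I j x -> R (x * y / r).
  move=> x y Ix Iy; apply: (key `|D - v y|%N) => //.
  by rewrite abszE; have := ler_norm (D - v y); lia.
elim: m y => [|m IH] y Iy hy x Ix.
  have [-> | xy0] := eqVneq (x * y) 0; first by rewrite mul0r; exact: (subring0 HR).
  apply: HD; first by rewrite mulf_neq0 ?invr_neq0.
  move: (xy0); rewrite mulf_eq0 negb_or => /andP [x0 y0].
  rewrite valuation_div // valuationM // vr.
  by have := Ival_ge Ix x0; lia.
have [-> | y0] := eqVneq y 0; first by rewrite mulr0 mul0r; exact: (subring0 HR).
have -> : x * y / r = l * (x * y / q) + x * (q' * y / q) / r.
  by rewrite /q'; field; rewrite q0 r0.
apply: (subringD HR); first by apply: (subringM HR) => //; exact: Hq.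
have [-> | y'0] := eqVneq (q' * y / q) 0; first by rewrite mulr0 mul0r; exact: (subring0 HR).
have q'0 : q' != 0 by apply: contraNneq y'0 => ->; rewrite !mul0r.
have vy' : v y < v (q' * y / q).
  rewrite valuation_div ?mulf_neq0 // valuationM // vq.
  by case: hl => [/eqP | h]; [rewrite (negbTE q'0) | lia].
apply: IH => //; last by lia.
split; first by apply: Hq.
by right; have := Ival_ge Iy y0; lia.
Qed.

Lemma divides_products_succ j k q s : R q -> R s -> q != 0 -> s != 0 ->
  v q = a j -> v s = a j.+1 ->
  set_sub (scale_set s (I k)) (scale_set q R) ->
  divides_products s (I j.+1) (I k.+1) -> divides_products q (I j.+1) (I k).
Proof.
move=> Rq Rs q0 s0 vq vs Hsub Hs x y Ix Iy.
have [-> | y0] := eqVneq y 0; first by rewrite mulr0 mul0r; exact: (subring0 HR).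
have [w [Rw sy]] : scale_set q R (s * y) by apply: Hsub; exists y.
have w0 : w != 0 by apply: contraTneq (mulf_neq0 s0 y0) => w0; rewrite sy w0 mulr0 eqxx.
have Iw : I k.+1 w.
  apply: Ival_succ => //; right.
  have : v (s * y) = v (q * w) by rewrite sy.
  rewrite !valuationM // vq vs; have := Ha_incr j; have := Ival_ge Iy y0; lia.
have -> : x * y / q = x * w / s by rewrite -[y](mulKf s0) sy; field; rewrite q0 s0.
exact: Hs.
Qed.

Lemma divides_products_from_succ j (L : K -> Prop) q : R q -> q != 0 -> v q = a j ->
  (forall y, L y -> R y) ->
  divides_products q (I j.+1) L -> divides_products q (I j) L.
Proof.
move=> Rq q0 vq LR Hq x y Ix Ly.
have [-> | x0] := eqVneq x 0; first by rewrite !mul0r; exact: (subring0 HR).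
have [Rx _] := Ix.
have [ajx | vxq] : a j < v x \/ v x = v q.
  by rewrite vq; have := Ival_ge Ix x0; rewrite le_eqVlt => /orP [/eqP -> | ]; [right | left].
  by apply: Hq => //; apply: Ival_succ => //; right.
have [l Rl hl] := residue_approx Rx Rq x0 q0 vxq.
have -> : x * y / q = l * y + (x - l * q) * y / q by field; rewrite q0.
apply: (subringD HR); first by apply: (subringM HR) => //; apply: LR.
apply: Hq => //; apply: Ival_succ; first by apply: (subringB HR) => //; apply: (subringM HR).
by rewrite -vq.
Qed.

End ValueSemigroup.

Theorem proposition3p4 (K : fieldType) (R : K -> Prop) (v : K -> int)
    (a : nat -> int) (n i : nat)
    (HR : is_subring R) (HQ : is_fraction_field_of R) (Hloc : is_local R)
    (Hv : normalized_discrete_valuation v)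
    (Hbar : forall x, integral_over R x <-> val_ring v x)
    (Hfin : finitely_generated_over R (val_ring v))
    (Hres : forall x, val_ring v x -> exists r, R r /\ val_max v (x - r))
    (Ha_incr : forall j, a j < a j.+1)
    (Ha : forall z, (exists r, [/\ R r, r != 0 & v r = z]) <-> (exists j, a j = z))
    (Hn : stable_from a n /\ (forall m, stable_from a m -> (n <= m)%N))
    (Hi1 : (1 <= i)%N) (Hi2 : (i + 2 <= n)%N) :
  let I := Ival R v a in
  ((forall r, R r -> r != 0 -> v r = a i ->
      set_eq (ideal_mul (I i) (I (i + 2)%N)) (scale_set r (I (i + 2)%N)))
   <->
   (exists q, [/\ R q, q != 0, v q = a i &
      set_eq (ideal_mul (I i) (I (i + 2)%N)) (scale_set q (I (i + 2)%N))]))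
  /\
  ((i + 3 <= n)%N ->
   forall s, R s -> s != 0 -> v s = a i.+1 ->
   set_eq (ideal_mul (I i.+1) (I (i + 3)%N)) (scale_set s (I (i + 3)%N)) ->
   ((exists q, [/\ R q, q != 0, v q = a i &
      set_eq (ideal_mul (I i) (I (i + 2)%N)) (scale_set q (I (i + 2)%N))])
    <->
    (exists q, [/\ R q, q != 0, v q = a i &
      set_sub (scale_set s (I (i + 2)%N)) (scale_set q R)]))).
Proof.
move=> I.
have HaR r : R r -> r != 0 -> exists j, v r = a j.
  move=> Rr r0; have [j <-] : exists j, a j = v r by apply/Ha; exists r.
  by exists j.
have [D HD] := conductor_exists HR HQ Hv Hfin.
split.
  split=> [H1 | [q [Rq q0 vq /(Ival_mul_eq_scaleP HR Hv _ Rq q0 vq) Hq]] r Rr r0 vr].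
    have [r [Rr r0 vr]] : exists r, [/\ R r, r != 0 & v r = a i] by apply/Ha; exists i.
    by exists r; split=> //; apply: H1.
  apply/(Ival_mul_eq_scaleP HR Hv _ Rr r0 vr).
  exact: (divides_products_same_value HR Hv Hres HD Rq Rr q0 r0 vq vr Hq).
move=> _ s Rs s0 vs /(Ival_mul_eq_scaleP HR Hv _ Rs s0 vs) Hs.
split=> [[q [Rq q0 vq /(Ival_mul_eq_scaleP HR Hv _ Rq q0 vq) Hq]] | [q [Rq q0 vq Hsub]]];
  exists q; split=> //.
  move=> _ [y [Iy ->]]; exists (s * y / q); split; last by rewrite [RHS]mulrC divfK.
  by apply: Hq => //; split=> //; right; rewrite vs ltW.
apply/(Ival_mul_eq_scaleP HR Hv _ Rq q0 vq).
apply: (divides_products_from_succ HR Hv Hres Ha_incr HaR Rq q0 vq) => [y [] //|].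
apply: (divides_products_succ HR Hv Ha_incr HaR Rq Rs q0 s0 vq vs Hsub).
by rewrite -addnS.
Qed.
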